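(* Let $C$ and $C'$ be Ptolemy circles, and let $x_1,x_2,x_3$ be distinct points of $C$ and $x'_1,x'_2,x'_3$ distinct points of $C'$. Then there exists a unique Möbius homeomorphism $\varphi:C\to C'$ with $\varphi(x_i)=x'_i$ for $i=1,2,3$.
   Context: A Ptolemy circle is a circle in an extended Ptolemy metric space, endowed with the induced extended metric. Here an extended metric on a set $X$ is a map $d:X\times X\to[0,\infty]$ such that for some subset $\Omega(d)$ with at most one element, $d$ is a finite metric on $X\setminus\Omega(d)$, $d(x,\omega)=\infty$ for $x\notin\Omega(d)$, $\omega\in\Omega(d)$, and $d(\omega,\omega)=0$ (the point $\omega$ is written $\infty$); the topology has basis the open balls around finite points and the complements of closed balls. In product-of-distances expressions in which a single point equals $\infty$, factors involving $\infty$ are cancelled. The space is Ptolemy if $d(x,y)d(z,w)\le d(x,z)d(y,w)+d(x,w)d(y,z)$ for all quadruples. A circle is a subset $\sigma$ homeomorphic to $S^1$ such that for all distinct $x,y,z,w\in\sigma$ with $y,w$ in different components of $\sigma\setminus\{x,z\}$, $d(x,z)d(y,w)=d(x,y)d(z,w)+d(x,w)d(y,z)$. A quadruple is admissible if no entry occurs three or four times; $\mathrm{crt}(x,y,z,w)=(d(x,y)d(z,w):d(x,z)d(y,w):d(x,w)d(y,z))\in\mathbb{R}P^2$, with $\mathrm{crt}(x,y,z,\infty)=(d(x,y):d(x,z):d(y,z))$ and $\mathrm{crt}(x,y,\infty,\infty)=(0:1:1)$ (analogously for other positions). A Möbius map is an injective map preserving $\mathrm{crt}$ of all admissible quadruples.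 *)

From Stdlib Require Import Reals.
From Coquelicot Require Import Rbar.
Open Scope R_scope.

(*   Om : the set Omega(d) (at most one point, the point "infinity").   *)
Record EMS := {
  pt :> Type;
  d : pt -> pt -> Rbar;
  Om : pt -> bool;
  Om_atmost1 : forall a b, Om a = true -> Om b = true -> a = b;
  d_fin : forall x y, Om x = false -> Om y = false -> is_finite (d x y);
  d_nonneg : forall x y, Om x = false -> Om y = false -> 0 <= real (d x y);
  d_zero : forall x y, Om x = false -> Om y = false ->
             (real (d x y) = 0 <-> x = y);
  d_sym : forall x y, Om x = false -> Om y = false -> d x y = d y x;
  d_tri : forall x y z, Om x = false -> Om y = false -> Om z = false ->
             real (d x z) <= real (d x y) + real (d y z);
  d_inf : forall x w, Om x = false -> Om w = true ->
             d x w = p_infty /\ d w x = p_infty;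
  d_infinf : forall w, Om w = true -> d w w = Finite 0
}.

(* A single distance factor d(a,b) inside a product-of-distances expression,
   with the convention that factors involving the point infinity are
   cancelled (replaced by 1).  If both a and b are infinity, the factor is
   d(oo,oo) = 0. *)
Definition dfac {X : EMS} (a b : X) : R :=
  if xorb (Om X a) (Om X b) then 1 else real (d X a b).

Definition Ptolemy (X : EMS) : Prop :=
  forall x y z w : X,
    dfac x y * dfac z w <= dfac x z * dfac y w + dfac x w * dfac y z.

Definition basic_open {X : EMS} (B : X -> Prop) : Prop :=
  exists (x : X) (r : R), Om X x = false /\
    ( (forall y, B y <-> Rbar_lt (d X x y) (Finite r))
   \/ (forall y, B y <-> Rbar_lt (Finite r) (d X x y))).

Definition ems_open {X : EMS} (U : X -> Prop) : Prop :=
  forall p, U p -> exists B, basic_open B /\ B p /\ (forall q, B q -> U q).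

Definition R2_open (U : R * R -> Prop) : Prop :=
  forall p, U p -> exists e, 0 < e /\
    forall q, (fst q - fst p) ^ 2 + (snd q - snd p) ^ 2 < e ^ 2 -> U q.

Definition S1 (p : R * R) : Prop := (fst p) ^ 2 + (snd p) ^ 2 = 1.

Definition homeo_on {A B : Type}
  (openA : (A -> Prop) -> Prop) (openB : (B -> Prop) -> Prop)
  (SA : A -> Prop) (SB : B -> Prop) (f : A -> B) (g : B -> A) : Prop :=
  (forall a, SA a -> SB (f a)) /\
  (forall b, SB b -> SA (g b)) /\
  (forall a, SA a -> g (f a) = a) /\
  (forall b, SB b -> f (g b) = b) /\
  (forall V, openB V -> exists U, openA U /\
       forall a, SA a -> (V (f a) <-> U a)) /\
  (forall U, openA U -> exists V, openB V /\
       forall b, SB b -> (U (g b) <-> V b)).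

Definition ems_connected {X : EMS} (A : X -> Prop) : Prop :=
  ~ exists U V : X -> Prop, ems_open U /\ ems_open V /\
      (forall a, A a -> U a \/ V a) /\
      (exists a, A a /\ U a) /\ (exists a, A a /\ V a) /\
      (forall a, A a -> U a -> V a -> False).

Definition same_component {X : EMS} (S : X -> Prop) (y w : X) : Prop :=
  exists A : X -> Prop, (forall a, A a -> S a) /\ ems_connected A /\ A y /\ A w.

Definition is_circle (X : EMS) (sigma : X -> Prop) : Prop :=
  (exists (f : R * R -> X) (g : X -> R * R),
      homeo_on R2_open ems_open S1 sigma f g) /\
  (forall x y z w : X, sigma x -> sigma y -> sigma z -> sigma w ->
     x <> y -> x <> z -> x <> w -> y <> z -> y <> w -> z <> w ->
     ~ same_component (fun p => sigma p /\ p <> x /\ p <> z) y w ->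
     dfac x z * dfac y w = dfac x y * dfac z w + dfac x w * dfac y z).

(* Cross ratio triple crt(x,y,z,w), a representative in R^3 of a point of
   RP^2, with the conventions for infinity (cancellation when one entry is
   infinity; (0:1:1) and its analogues when two entries are infinity). *)
Definition crt {X : EMS} (x y z w : X) : R * R * R :=
  (dfac x y * dfac z w, dfac x z * dfac y w, dfac x w * dfac y z).

Definition proj_eq (u v : R * R * R) : Prop :=
  exists t : R, t <> 0 /\
    fst (fst u) = t * fst (fst v) /\ snd (fst u) = t * snd (fst v) /\
    snd u = t * snd v.

Definition admissible {T : Type} (x y z w : T) : Prop :=
  ~ (x = y /\ y = z) /\ ~ (x = y /\ y = w) /\
  ~ (x = z /\ z = w) /\ ~ (y = z /\ z = w).

Definition moebius_on {X X' : EMS} (C : X -> Prop) (phi : X -> X') : Prop :=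
  (forall a b, C a -> C b -> phi a = phi b -> a = b) /\
  (forall x y z w, C x -> C y -> C z -> C w -> admissible x y z w ->
     proj_eq (crt (phi x) (phi y) (phi z) (phi w)) (crt x y z w)).

Definition moebius_homeo {X X' : EMS} (C : X -> Prop) (C' : X' -> Prop)
  (phi : X -> X') : Prop :=
  (exists psi : X' -> X, homeo_on ems_open ems_open C C' phi psi) /\
  moebius_on C phi.

(* Fix c on the circle C and pass to the metric inversion
   d_c(p, q) = d(p, q) / (d(p, c) d(q, c)).  When q separates p from r on C \ {c}, the circle
   identity for (c, p, q, r) reads d_c(p, r) = d_c(p, q) + d_c(q, r).  Ordering C \ {c} by a
   stereographic coordinate, the signed d_c-distance from a base point is therefore an
   isometry of (C \ {c}, d_c) into R, and it is onto by the intermediate value theorem since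
   d_c blows up near c.  Hence d(p, q) = |s p - s q| ρ(p) ρ(q) for a homeomorphism
   s : C → R ∪ {∞} sending x1, x2, x3 to 0, 1, ∞, so cross ratios on C are those of
   R ∪ {∞}.  Composing two such coordinates gives the Möbius homeomorphism; uniqueness holds
   because a point of R ∪ {∞} is determined by its cross ratio with 0, 1, ∞. *)

From Stdlib Require Import Reals Lra Psatz Classical ClassicalEpsilon.
From Coquelicot Require Import Rbar Rcomplements.
Open Scope R_scope.

Section DistanceFactor.

Context {X : EMS}.
Implicit Types a b c o p q : X.

Lemma dfac_finite a b : Om X a = false -> Om X b = false -> dfac a b = real (d X a b).
Proof. intros Ha Hb. unfold dfac. now rewrite Ha, Hb. Qed.

Lemma dfac_infinite_l a b : Om X a = true -> Om X b = false -> dfac a b = 1.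
Proof. intros Ha Hb. unfold dfac. now rewrite Ha, Hb. Qed.

Lemma dfac_infinite_r a b : Om X a = false -> Om X b = true -> dfac a b = 1.
Proof. intros Ha Hb. unfold dfac. now rewrite Ha, Hb. Qed.

Lemma dfac_sym a b : dfac a b = dfac b a.
Proof.
  unfold dfac. destruct (Om X a) eqn:Ha, (Om X b) eqn:Hb; simpl; auto.
  - now rewrite (Om_atmost1 X a b Ha Hb).
  - now rewrite d_sym.
Qed.

Lemma dfac_self a : dfac a a = 0.
Proof.
  unfold dfac. destruct (Om X a) eqn:Ha; simpl.
  - now rewrite d_infinf.
  - now apply (d_zero X a a Ha Ha).
Qed.

Lemma dfac_gt0 a b : a <> b -> 0 < dfac a b.
Proof.
  intro Hab. unfold dfac. destruct (Om X a) eqn:Ha, (Om X b) eqn:Hb; simpl; try lra.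
  - now destruct Hab; apply Om_atmost1.
  - destruct (d_nonneg X a b Ha Hb) as [|E]; auto.
    now destruct Hab; apply (d_zero X a b Ha Hb).
Qed.

Lemma dfac_ge0 a b : 0 <= dfac a b.
Proof.
  destruct (classic (a = b)) as [->|Hab].
  - rewrite dfac_self; lra.
  - now left; apply dfac_gt0.
Qed.

Lemma dfac_triangle a b c : Om X a = false -> Om X b = false -> Om X c = false ->
  dfac a c <= dfac a b + dfac b c.
Proof. intros. rewrite !dfac_finite by auto. now apply d_tri. Qed.

Lemma basic_open_ems_open (B : X -> Prop) : basic_open B -> ems_open B.
Proof. intros HB p Bp. now exists B. Qed.

Definition ball o r : X -> Prop := fun q => Rbar_lt (d X o q) (Finite r).
Definition coball o r : X -> Prop := fun q => Rbar_lt (Finite r) (d X o q).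

Lemma basic_open_ball o r : Om X o = false -> basic_open (ball o r).
Proof. intros Ho. exists o, r. split; auto. left; tauto. Qed.

Lemma basic_open_coball o r : Om X o = false -> basic_open (coball o r).
Proof. intros Ho. exists o, r. split; auto. right; tauto. Qed.

Lemma ballE o q r : Om X o = false -> Om X q = false -> ball o r q <-> dfac o q < r.
Proof.
  intros Ho Hq. unfold ball. rewrite dfac_finite by auto.
  now rewrite <- (d_fin X o q Ho Hq).
Qed.

Lemma coballE o q r : Om X o = false -> Om X q = false -> coball o r q <-> r < dfac o q.
Proof.
  intros Ho Hq. unfold coball. rewrite dfac_finite by auto.
  now rewrite <- (d_fin X o q Ho Hq).
Qed.

Lemma ball_infinite o q r : Om X o = false -> Om X q = true -> ~ ball o r q.
Proof. intros Ho Hq. unfold ball. now destruct (d_inf X o q Ho Hq) as [-> _]. Qed.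

Lemma coball_infinite o q r : Om X o = false -> Om X q = true -> coball o r q.
Proof. intros Ho Hq. unfold coball. now destruct (d_inf X o q Ho Hq) as [-> _]. Qed.

Lemma ball_center o r : Om X o = false -> 0 < r -> ball o r o.
Proof. intros Ho Hr. apply ballE; auto. rewrite dfac_self; lra. Qed.

Lemma basic_open_near_finite (B : X -> Prop) p : basic_open B -> B p -> Om X p = false ->
  exists del, 0 < del /\ forall q, Om X q = false -> dfac p q < del -> B q.
Proof.
  intros [o [r [Ho [HB|HB]]]] Bp Hp; apply HB in Bp.
  - apply (ballE o p r Ho Hp) in Bp.
    exists (r - dfac o p). split; [lra|]. intros q Hq Hpq.
    apply HB, (ballE o q r Ho Hq).
    pose proof (dfac_triangle o p q Ho Hp Hq). lra.
  - apply (coballE o p r Ho Hp) in Bp.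
    exists (dfac o p - r). split; [lra|]. intros q Hq Hpq.
    apply HB, (coballE o q r Ho Hq).
    pose proof (dfac_triangle o q p Ho Hq Hp). rewrite (dfac_sym q p) in *. lra.
Qed.

Lemma basic_open_near_infinite (B : X -> Prop) p : basic_open B -> B p -> Om X p = true ->
  exists o r, Om X o = false /\ forall q, Om X q = false -> r < dfac o q -> B q.
Proof.
  intros [o [r [Ho [HB|HB]]]] Bp Hp; apply HB in Bp.
  - now destruct (ball_infinite o p r Ho Hp).
  - exists o, r. split; auto. intros q Hq Hr. now apply HB, (coballE o q r Ho Hq).
Qed.

End DistanceFactor.

Section InvertedDistance.

Context {X : EMS}.
Implicit Types a c o p q : X.

Definition inv_dist c p q : R := dfac p q / (dfac p c * dfac q c).

Lemma inv_dist_sym c p q : inv_dist c p q = inv_dist c q p.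
Proof. unfold inv_dist. rewrite dfac_sym. f_equal. ring. Qed.

Lemma inv_dist_self c p : inv_dist c p p = 0.
Proof. unfold inv_dist. rewrite dfac_self. unfold Rdiv. ring. Qed.

Lemma inv_dist_gt0 c p q : p <> q -> p <> c -> q <> c -> 0 < inv_dist c p q.
Proof.
  intros. apply Rdiv_lt_0_compat; [|apply Rmult_lt_0_compat]; now apply dfac_gt0.
Qed.

Lemma inv_dist_ge0 c p q : p <> c -> q <> c -> 0 <= inv_dist c p q.
Proof.
  intros. destruct (classic (p = q)) as [->|].
  - rewrite inv_dist_self; lra.
  - now left; apply inv_dist_gt0.
Qed.

Lemma inv_dist_small_near c p eps : p <> c -> 0 < eps ->
  exists B, basic_open B /\ B p /\ forall q, B q -> q <> c /\ inv_dist c p q < eps.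
Proof.
  intros Hpc He. unfold inv_dist.
  destruct (Om X p) eqn:Hp, (Om X c) eqn:Hc.
  - now destruct Hpc; apply Om_atmost1.
  - exists (coball c (1 / eps)).
    split; [now apply basic_open_coball|]. split; [now apply coball_infinite|].
    intros q Bq. destruct (Om X q) eqn:Hq.
    + assert (q = p) as -> by now apply Om_atmost1.
      split; auto. rewrite dfac_self; unfold Rdiv; lra.
    + apply (coballE c q _ Hc Hq) in Bq.
      assert (0 < 1 / eps) by (apply Rdiv_lt_0_compat; lra).
      rewrite (dfac_infinite_l p q Hp Hq), (dfac_infinite_l p c Hp Hc), dfac_sym.
      split; [intros ->; rewrite dfac_self in Bq; lra|].
      apply Rlt_div_l; [nra|]. apply Rlt_div_l in Bq; [|lra]. nra.
  - exists (ball p eps).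
    split; [now apply basic_open_ball|]. split; [now apply ball_center|].
    intros q Bq. destruct (Om X q) eqn:Hq; [now destruct (ball_infinite p q eps Hp Hq)|].
    apply (ballE p q _ Hp Hq) in Bq.
    split; [congruence|].
    rewrite (dfac_infinite_r p c Hp Hc), (dfac_infinite_r q c Hq Hc). lra.
  - set (m := dfac p c). assert (Hm : 0 < m) by now apply dfac_gt0.
    set (del := Rmin (m / 2) (eps * m * m / 2)).
    assert (del <= m / 2) by apply Rmin_l. assert (del <= eps * m * m / 2) by apply Rmin_r.
    assert (0 < eps * m * m) by (repeat apply Rmult_lt_0_compat; lra).
    assert (0 < del) by (apply Rmin_glb_lt; lra).
    exists (ball p del).
    split; [now apply basic_open_ball|]. split; [now apply ball_center|].
    intros q Bq. destruct (Om X q) eqn:Hq; [now destruct (ball_infinite p q del Hp Hq)|].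
    apply (ballE p q _ Hp Hq) in Bq.
    pose proof (dfac_triangle p q c Hp Hq Hc) as Htri. fold m in Htri.
    assert (m / 2 < dfac q c) by lra.
    split; [intros ->; rewrite dfac_self in *; lra|].
    fold m. apply Rlt_div_l; [nra|]. pose proof (dfac_ge0 p q). nra.
Qed.

Lemma inv_dist_large_near_center c a M : a <> c ->
  exists B, basic_open B /\ B c /\ forall q, B q -> q <> c -> M < inv_dist c a q.
Proof.
  intros Hac. unfold inv_dist. pose proof (Rabs_pos M). pose proof (Rle_abs M).
  destruct (Om X c) eqn:Hc, (Om X a) eqn:Ha.
  - now destruct Hac; apply Om_atmost1.
  - exists (coball a (Rabs M)).
    split; [now apply basic_open_coball|]. split; [now apply coball_infinite|].
    intros q Bq Hqc. destruct (Om X q) eqn:Hq; [now destruct Hqc; apply Om_atmost1|].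
    apply (coballE a q _ Ha Hq) in Bq.
    rewrite (dfac_infinite_r a c Ha Hc), (dfac_infinite_r q c Hq Hc). lra.
  - set (del := 1 / (Rabs M + 1)).
    assert (0 < del) by (apply Rdiv_lt_0_compat; lra).
    assert (Rabs M * del < 1) by (unfold del; rewrite Rmult_div_assoc; apply Rlt_div_l; lra).
    exists (ball c del).
    split; [now apply basic_open_ball|]. split; [now apply ball_center|].
    intros q Bq Hqc. destruct (Om X q) eqn:Hq; [now destruct (ball_infinite c q del Hc Hq)|].
    apply (ballE c q _ Hc Hq) in Bq. rewrite dfac_sym in Bq.
    assert (0 < dfac q c) by now apply dfac_gt0.
    rewrite (dfac_infinite_l a q Ha Hq), (dfac_infinite_l a c Ha Hc).
    apply Rlt_div_r; nra.
  - set (m := dfac a c). assert (Hm : 0 < m) by now apply dfac_gt0.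
    set (del := Rmin (m / 2) (1 / (2 * (Rabs M + 1)))).
    assert (del <= m / 2) by apply Rmin_l.
    assert (del <= 1 / (2 * (Rabs M + 1))) by apply Rmin_r.
    assert (0 < del) by (apply Rmin_glb_lt; [lra|apply Rdiv_lt_0_compat; lra]).
    assert (del * (2 * (Rabs M + 1)) <= 1) by (apply Rle_div_r; lra).
    exists (ball c del).
    split; [now apply basic_open_ball|]. split; [now apply ball_center|].
    intros q Bq Hqc. destruct (Om X q) eqn:Hq; [now destruct (ball_infinite c q del Hc Hq)|].
    apply (ballE c q _ Hc Hq) in Bq. rewrite dfac_sym in Bq.
    assert (0 < dfac q c) by now apply dfac_gt0.
    pose proof (dfac_triangle a q c Ha Hq Hc) as Htri. fold m in Htri |- *. apply Rlt_div_r; [nra|].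
    assert (M * (m * dfac q c) <= Rabs M * (m * dfac q c)) by (apply Rmult_le_compat_r; nra).
    assert (Rabs M * dfac q c <= Rabs M * del) by (apply Rmult_le_compat_l; lra).
    nra.
Qed.

Lemma basic_open_contains_inv_ball c p (B : X -> Prop) : p <> c -> basic_open B -> B p ->
  exists eps, 0 < eps /\ forall q, q <> c -> inv_dist c p q < eps -> B q.
Proof.
  intros Hpc HB Bp. unfold inv_dist. destruct (Om X p) eqn:Hp.
  - destruct (Om X c) eqn:Hc; [now destruct Hpc; apply Om_atmost1|].
    destruct (basic_open_near_infinite B p HB Bp Hp) as [o [r [Ho HBo]]].
    set (N := Rabs r + dfac o c + 1).
    pose proof (Rabs_pos r). pose proof (Rle_abs r). pose proof (dfac_ge0 o c).
    exists (1 / N). split; [apply Rdiv_lt_0_compat; unfold N; lra|]. intros q Hqc Hd.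
    destruct (Om X q) eqn:Hq; [now replace q with p by now apply Om_atmost1|].
    apply HBo; auto.
    rewrite (dfac_infinite_l p q Hp Hq), (dfac_infinite_l p c Hp Hc) in Hd.
    assert (0 < dfac q c) by now apply dfac_gt0.
    assert (N < dfac q c).
    { unfold Rdiv in Hd. rewrite !Rmult_1_l in Hd. now apply Rinv_lt_cancel in Hd. }
    pose proof (dfac_triangle c o q Hc Ho Hq). rewrite (dfac_sym c q), (dfac_sym c o) in *.
    unfold N in *. lra.
  - destruct (basic_open_near_finite B p HB Bp Hp) as [del [Hdel HBd]].
    destruct (Om X c) eqn:Hc.
    + exists del. split; auto. intros q Hqc Hd.
      destruct (Om X q) eqn:Hq; [now destruct Hqc; apply Om_atmost1|].
      apply HBd; auto.
      rewrite (dfac_infinite_r p c Hp Hc), (dfac_infinite_r q c Hq Hc) in Hd. lra.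
    + set (m := dfac p c). assert (Hm : 0 < m) by now apply dfac_gt0.
      set (eps := Rmin (1 / (2 * m)) (del / (2 * m * m))).
      assert (eps * m <= 1 / 2).
      { apply Rle_div_r; [lra|]. replace (1 / 2 / m) with (1 / (2 * m)) by (field; lra).
        apply Rmin_l. }
      assert (eps * (2 * m * m) <= del) by (apply Rle_div_r; [nra|apply Rmin_r]).
      assert (0 < eps) by (apply Rmin_glb_lt; apply Rdiv_lt_0_compat; nra).
      exists eps. split; auto. intros q Hqc Hd.
      assert (0 < dfac q c) by now apply dfac_gt0.
      fold m in Hd. apply Rlt_div_l in Hd; [|nra].
      destruct (Om X q) eqn:Hq.
      * rewrite (dfac_infinite_r p q Hp Hq), (dfac_infinite_l q c Hq Hc) in Hd. nra.
      * apply HBd; auto.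
        pose proof (dfac_triangle q p c Hq Hp Hc) as Htri. fold m in Htri.
        rewrite (dfac_sym q p) in Htri. pose proof (dfac_ge0 p q).
        assert (eps * m * dfac q c <= eps * m * (dfac p q + m)) by (apply Rmult_le_compat_l; nra).
        assert (eps * m * dfac p q <= 1 / 2 * dfac p q) by (apply Rmult_le_compat_r; lra).
        nra.
Qed.

Lemma basic_open_contains_inv_coball c a (B : X -> Prop) : a <> c -> basic_open B -> B c ->
  exists M, forall q, q <> c -> M < inv_dist c a q -> B q.
Proof.
  intros Hac HB Bc. unfold inv_dist. destruct (Om X c) eqn:Hc.
  - destruct (Om X a) eqn:Ha; [now destruct Hac; apply Om_atmost1|].
    destruct (basic_open_near_infinite B c HB Bc Hc) as [o [r [Ho HBo]]].
    exists (Rabs r + dfac o a). intros q Hqc Hd.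
    destruct (Om X q) eqn:Hq; [now destruct Hqc; apply Om_atmost1|].
    apply HBo; auto.
    rewrite (dfac_infinite_r a c Ha Hc), (dfac_infinite_r q c Hq Hc), Rmult_1_l, Rdiv_1_r in Hd.
    pose proof (dfac_triangle a o q Ha Ho Hq). rewrite (dfac_sym a o) in *.
    pose proof (Rle_abs r). lra.
  - destruct (basic_open_near_finite B c HB Bc Hc) as [del [Hdel HBd]].
    destruct (Om X a) eqn:Ha.
    + exists (1 / del). intros q Hqc Hd.
      assert (0 < 1 / del) by (apply Rdiv_lt_0_compat; lra).
      destruct (Om X q) eqn:Hq.
      { replace q with a in Hd by now apply Om_atmost1. rewrite dfac_self in Hd.
        unfold Rdiv in Hd. lra. }
      apply HBd; auto. rewrite dfac_sym.
      assert (0 < dfac q c) by now apply dfac_gt0.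
      rewrite (dfac_infinite_l a q Ha Hq), (dfac_infinite_l a c Ha Hc) in Hd.
      unfold Rdiv in Hd. rewrite !Rmult_1_l in Hd. now apply Rinv_lt_cancel in Hd.
    + set (m := dfac a c). assert (Hm : 0 < m) by now apply dfac_gt0.
      exists ((2 + m / del) / m). intros q Hqc Hd.
      assert (0 < dfac q c) by now apply dfac_gt0.
      assert (0 < m / del) by now apply Rdiv_lt_0_compat.
      fold m in Hd. apply Rlt_div_r in Hd; [|nra].
      replace ((2 + m / del) / m * (m * dfac q c)) with ((2 + m / del) * dfac q c) in Hd
        by (field; lra).
      destruct (Om X q) eqn:Hq.
      * rewrite (dfac_infinite_r a q Ha Hq), (dfac_infinite_l q c Hq Hc) in Hd. lra.
      * apply HBd; auto. rewrite dfac_sym.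
        pose proof (dfac_triangle a c q Ha Hc Hq) as Htri. fold m in Htri.
        rewrite (dfac_sym c q) in Htri.
        assert (m / del * del = m) by (field; lra).
        nra.
Qed.

End InvertedDistance.

Section Stereographic.

Implicit Types (o p q : R * R) (t : R).

(* [(stereo_x t, stereo_y t)] is the inverse stereographic projection of [t] from the
   pole [(0, 1)]; [stereo o] rotates it so that the pole becomes [o]. *)
Definition stereo_x t := 2 * t / (t * t + 1).
Definition stereo_y t := (t * t - 1) / (t * t + 1).

Definition stereo o t : R * R :=
  (snd o * stereo_x t + fst o * stereo_y t, - fst o * stereo_x t + snd o * stereo_y t).

Definition stereo_inv o p : R :=
  (snd o * fst p - fst o * snd p) / (1 - (fst o * fst p + snd o * snd p)).

Definition wedge o q p : R :=
  (fst q - fst o) * (snd p - snd o) - (snd q - snd o) * (fst p - fst o).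

Lemma wedge_antisym o p q : wedge o q p = - wedge o p q.
Proof. unfold wedge. ring. Qed.

Lemma sq_plus1_gt0 t : 0 < t * t + 1.
Proof. nra. Qed.

Lemma stereo_S1 o t : S1 o -> S1 (stereo o t).
Proof.
  unfold S1, stereo, stereo_x, stereo_y; cbn [fst snd]. intros Ho.
  pose proof (sq_plus1_gt0 t).
  transitivity ((fst o ^ 2 + snd o ^ 2) * ((2 * t) ^ 2 + (t * t - 1) ^ 2) / (t * t + 1) ^ 2);
    [field; lra|].
  rewrite Ho. field. lra.
Qed.

Lemma stereo_neq_pole o t : S1 o -> stereo o t <> o.
Proof.
  unfold S1, stereo. intros Ho E. destruct o as [al be]; cbn [fst snd] in *.
  injection E as E1 E2.
  assert (Hy : stereo_y t = 1).
  { transitivity (al * (be * stereo_x t + al * stereo_y t)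
                  + be * (- al * stereo_x t + be * stereo_y t)
                  - (al ^ 2 + be ^ 2 - 1) * stereo_y t); [ring|].
    rewrite E1, E2, Ho. lra. }
  unfold stereo_y in Hy. pose proof (sq_plus1_gt0 t).
  apply (Rmult_eq_compat_r (t * t + 1)) in Hy. unfold Rdiv in Hy.
  rewrite Rmult_assoc, Rinv_l, Rmult_1_r in Hy by lra. lra.
Qed.

Lemma stereo_inv_stereo o t : S1 o -> stereo_inv o (stereo o t) = t.
Proof.
  unfold S1, stereo_inv, stereo. intros Ho. destruct o as [al be]; cbn [fst snd] in *.
  replace (be * (be * stereo_x t + al * stereo_y t) - al * (- al * stereo_x t + be * stereo_y t))
    with ((al ^ 2 + be ^ 2) * stereo_x t) by ring.
  replace (al * (be * stereo_x t + al * stereo_y t) + be * (- al * stereo_x t + be * stereo_y t))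
    with ((al ^ 2 + be ^ 2) * stereo_y t) by ring.
  rewrite Ho. unfold stereo_x, stereo_y. pose proof (sq_plus1_gt0 t). field. lra.
Qed.

Lemma stereo_stereo_inv o p : S1 o -> S1 p -> p <> o -> stereo o (stereo_inv o p) = p.
Proof.
  unfold S1, stereo_inv, stereo. intros Ho Hp Hpo.
  destruct o as [al be], p as [u v]; cbn [fst snd] in *.
  (* [(x, y)] are the coordinates of [p] in the frame rotated so that the pole is [(0, 1)]. *)
  set (x := be * u - al * v). set (y := al * u + be * v).
  assert (Hxy : x * x + y * y = 1).
  { unfold x, y. transitivity ((al ^ 2 + be ^ 2) * (u ^ 2 + v ^ 2)); [ring|].
    rewrite Ho, Hp. ring. }
  assert (Hu : u = be * x + al * y).
  { unfold x, y. transitivity ((al ^ 2 + be ^ 2) * u); [rewrite Ho|]; ring. }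
  assert (Hv : v = - al * x + be * y).
  { unfold x, y. transitivity ((al ^ 2 + be ^ 2) * v); [rewrite Ho|]; ring. }
  assert (Hy : 1 - y <> 0).
  { intro Ey. assert (Hx : x = 0) by nra. apply Hpo. rewrite Hu, Hv, Hx.
    f_equal; replace y with 1 by lra; ring. }
  set (t := x / (1 - y)).
  assert (Ht : t * t + 1 = 2 / (1 - y)).
  { unfold t. replace (x / (1 - y) * (x / (1 - y)) + 1)
      with ((x * x + (1 - y) * (1 - y)) / ((1 - y) * (1 - y))) by (field; auto).
    replace (x * x) with (1 - y * y) by lra. field. auto. }
  assert (stereo_x t = x) as ->.
  { unfold stereo_x. rewrite Ht. unfold t. field. auto. }
  assert (stereo_y t = y) as ->.
  { unfold stereo_y. replace (t * t - 1) with ((t * t + 1) - 2) by ring. rewrite Ht. field. auto. }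
  f_equal; lra.
Qed.

Lemma stereo_dist_le o s t : S1 o ->
  (fst (stereo o s) - fst (stereo o t)) ^ 2 + (snd (stereo o s) - snd (stereo o t)) ^ 2
  <= 4 * (s - t) ^ 2.
Proof.
  unfold S1, stereo. intros Ho. destruct o as [al be]; cbn [fst snd] in *.
  pose proof (sq_plus1_gt0 s). pose proof (sq_plus1_gt0 t).
  replace (_ ^ 2 + _ ^ 2)
    with ((al ^ 2 + be ^ 2) * (4 * (s - t) ^ 2 / ((s * s + 1) * (t * t + 1))))
    by (unfold stereo_x, stereo_y; field; lra).
  rewrite Ho, Rmult_1_l. apply Rle_div_l; [nra|].
  pose proof (pow2_ge_0 (s - t)). nra.
Qed.

Lemma stereo_dist_pole o t : S1 o ->
  (fst (stereo o t) - fst o) ^ 2 + (snd (stereo o t) - snd o) ^ 2 = 4 / (t * t + 1).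
Proof.
  unfold S1, stereo. intros Ho. destruct o as [al be]; cbn [fst snd] in *.
  pose proof (sq_plus1_gt0 t).
  replace (_ ^ 2 + _ ^ 2) with ((al ^ 2 + be ^ 2) * (4 / (t * t + 1)))
    by (unfold stereo_x, stereo_y; field; lra).
  rewrite Ho. ring.
Qed.

Lemma wedge_stereo o s t : S1 o ->
  wedge o (stereo o s) (stereo o t) = 4 * (t - s) / ((s * s + 1) * (t * t + 1)).
Proof.
  unfold S1, wedge, stereo. intros Ho. destruct o as [al be]; cbn [fst snd] in *.
  pose proof (sq_plus1_gt0 s). pose proof (sq_plus1_gt0 t).
  replace (_ - _) with ((al ^ 2 + be ^ 2) * (4 * (t - s) / ((s * s + 1) * (t * t + 1))))
    by (unfold stereo_x, stereo_y; field; lra).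
  rewrite Ho. ring.
Qed.

End Stereographic.

Lemma sq_lt_abs_lt x e : 0 < e -> x ^ 2 < e ^ 2 -> Rabs x < e.
Proof. intros He Hx. unfold Rabs. destruct (Rcase_abs x); nra. Qed.

Lemma abs_mul_le A x e : Rabs x < e -> - (Rabs A * e) <= A * x.
Proof.
  intros Hx. pose proof (Rabs_pos A).
  assert (Rabs (A * x) <= Rabs A * e).
  { rewrite Rabs_mult. apply Rmult_le_compat_l; lra. }
  pose proof (Rle_abs (- (A * x))). rewrite Rabs_Ropp in *. lra.
Qed.

Lemma R2_open_affine_pos (h : R * R -> R) (A B : R) :
  (forall p q, h q - h p = A * (fst q - fst p) + B * (snd q - snd p)) ->
  R2_open (fun p => 0 < h p).
Proof.
  intros Hh p Hp. pose proof (Rabs_pos A). pose proof (Rabs_pos B).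
  set (e := h p / (Rabs A + Rabs B + 1)).
  assert (He : 0 < e) by (apply Rdiv_lt_0_compat; lra).
  assert (Hhe : h p = e * (Rabs A + Rabs B + 1)) by (unfold e; field; lra).
  exists e. split; auto. intros q Hq.
  pose proof (pow2_ge_0 (fst q - fst p)). pose proof (pow2_ge_0 (snd q - snd p)).
  pose proof (abs_mul_le A (fst q - fst p) e (sq_lt_abs_lt (fst q - fst p) e He ltac:(lra))).
  pose proof (abs_mul_le B (snd q - snd p) e (sq_lt_abs_lt (snd q - snd p) e He ltac:(lra))).
  specialize (Hh p q). nra.
Qed.

Lemma R2_open_wedge_pos o q : R2_open (fun p => 0 < wedge o q p).
Proof.
  apply (R2_open_affine_pos _ (- (snd q - snd o)) (fst q - fst o)). intros. unfold wedge. ring.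
Qed.

Lemma R2_open_wedge_neg o q : R2_open (fun p => 0 < - wedge o q p).
Proof.
  apply (R2_open_affine_pos _ (snd q - snd o) (- (fst q - fst o))). intros. unfold wedge. ring.
Qed.

(* The extended line [R ∪ {∞}], with [∞ = None] and the distance convention [d(x, ∞) = 1]
   that [dfac] uses for the point at infinity. *)
Definition ext_dist (u v : option R) : R :=
  match u, v with
  | Some x, Some y => Rabs (x - y)
  | None, None => 0
  | _, _ => 1
  end.

Definition ext_open (O : option R -> Prop) : Prop :=
  (forall x, O (Some x) -> exists e, 0 < e /\ forall y, Rabs (y - x) < e -> O (Some y)) /\
  (O None -> exists M, forall y, M < Rabs y -> O (Some y)).

Definition rel_open {X : EMS} (C : X -> Prop) (W : X -> Prop) : Prop :=
  forall p, C p -> W p -> exists B, basic_open B /\ B p /\ forall q, C q -> B q -> W q.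

(* Up to the conformal factor [model_scale], a circle is the extended line, with
   [a, b, c] sent to [0, 1, ∞]. *)
Set Implicit Arguments.
Record circle_model {X : EMS} (C : X -> Prop) (a b c : X) : Type := {
  model_coord : X -> option R;
  model_point : option R -> X;
  model_scale : X -> R;
  model_point_in u : C (model_point u);
  model_coord_point u : model_coord (model_point u) = u;
  model_point_coord p : C p -> model_point (model_coord p) = p;
  model_coord_a : model_coord a = Some 0;
  model_coord_b : model_coord b = Some 1;
  model_coord_c : model_coord c = None;
  model_dfac p q : C p -> C q ->
    dfac p q = ext_dist (model_coord p) (model_coord q) * model_scale p * model_scale q;
  model_scale_neq0 p : C p -> model_scale p <> 0;
  model_point_open W : rel_open C W -> ext_open (fun u => W (model_point u));
  model_coord_open O : ext_open O -> rel_open C (fun p => O (model_coord p))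
}.
Unset Implicit Arguments.

Section CircleChart.

Variables (X : EMS) (C : X -> Prop) (f : R * R -> X) (g : X -> R * R).
Hypothesis Hfg : homeo_on R2_open ems_open S1 C f g.
Variable c : X.
Hypothesis Cc : C c.

Definition coord (p : X) : R := stereo_inv (g c) (g p).
Definition param (t : R) : X := f (stereo (g c) t).

Lemma pole_S1 : S1 (g c).
Proof. destruct Hfg as [_ [Hg _]]. now apply Hg. Qed.

Lemma stereo_coord p : C p -> p <> c -> stereo (g c) (coord p) = g p.
Proof.
  intros Cp Hpc. destruct Hfg as [_ [Hg [_ [Hfg' _]]]].
  apply stereo_stereo_inv; [apply pole_S1|now apply Hg|].
  intros E. apply Hpc. now rewrite <- (Hfg' p Cp), <- (Hfg' c Cc), E.
Qed.

Lemma coord_inj p q : C p -> C q -> p <> c -> q <> c -> coord p = coord q -> p = q.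
Proof.
  intros Cp Cq Hp Hq E. destruct Hfg as [_ [_ [_ [Hfg' _]]]].
  rewrite <- (Hfg' p Cp), <- (Hfg' q Cq), <- (stereo_coord p), <- (stereo_coord q), E; auto.
Qed.

Lemma param_in t : C (param t).
Proof. destruct Hfg as [Hf _]. apply Hf, stereo_S1, pole_S1. Qed.

Lemma param_neq_center t : param t <> c.
Proof.
  destruct Hfg as [_ [_ [Hgf _]]]. intros E.
  apply (stereo_neq_pole (g c) t pole_S1).
  unfold param in E. rewrite <- (Hgf (stereo (g c) t)) by apply stereo_S1, pole_S1.
  now rewrite E.
Qed.

Lemma coord_param t : coord (param t) = t.
Proof.
  destruct Hfg as [_ [_ [Hgf _]]]. unfold coord, param.
  rewrite Hgf by apply stereo_S1, pole_S1. apply stereo_inv_stereo, pole_S1.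
Qed.

Lemma param_near (B : X -> Prop) t0 : ems_open B -> B (param t0) ->
  exists del, 0 < del /\ forall t, Rabs (t - t0) < del -> B (param t).
Proof.
  intros HB Bt0. destruct Hfg as [_ [_ [_ [_ [Hpull _]]]]].
  destruct (Hpull B HB) as [U [HU EU]].
  destruct (HU (stereo (g c) t0)) as [e [He HUe]].
  { apply EU; [apply stereo_S1, pole_S1|exact Bt0]. }
  exists (e / 2). split; [lra|]. intros t Ht.
  apply EU; [apply stereo_S1, pole_S1|]. apply HUe.
  eapply Rle_lt_trans; [apply stereo_dist_le, pole_S1|].
  rewrite <- pow2_abs. pose proof (Rabs_pos (t - t0)). nra.
Qed.

Lemma param_near_center (B : X -> Prop) : ems_open B -> B c ->
  exists T, forall t, T < Rabs t -> B (param t).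
Proof.
  intros HB Bc. destruct Hfg as [_ [Hg [_ [Hfg' [Hpull _]]]]].
  destruct (Hpull B HB) as [U [HU EU]].
  destruct (HU (g c)) as [e [He HUe]].
  { apply EU; [now apply Hg|now rewrite Hfg']. }
  exists (2 / e). intros t Ht.
  apply EU; [apply stereo_S1, pole_S1|]. apply HUe.
  rewrite stereo_dist_pole by apply pole_S1.
  assert (2 < Rabs t * e) by (apply Rlt_div_l in Ht; lra).
  assert (t * t = Rabs t * Rabs t) by (rewrite <- Rabs_mult, Rabs_right; nra).
  pose proof (sq_plus1_gt0 t). apply Rlt_div_l; nra.
Qed.

Lemma wedge_coord_pos q z : C q -> C z -> q <> c -> z <> c ->
  coord q < coord z -> 0 < wedge (g c) (g q) (g z).
Proof.
  intros Cq Cz Hq Hz Hlt.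
  rewrite <- (stereo_coord q), <- (stereo_coord z), wedge_stereo by (auto; apply pole_S1).
  pose proof (sq_plus1_gt0 (coord q)). pose proof (sq_plus1_gt0 (coord z)).
  apply Rdiv_lt_0_compat; nra.
Qed.

Lemma coord_separates p q r : C p -> C q -> C r -> p <> c -> q <> c -> r <> c ->
  coord p < coord q -> coord q < coord r ->
  ~ same_component (fun z => C z /\ z <> c /\ z <> q) p r.
Proof.
  intros Cp Cq Cr Hp Hq Hr Hpq Hqr [A [HA [Hcon [Ap Ar]]]].
  destruct Hfg as [_ [_ [_ [_ [_ Hpush]]]]].
  (* The line through [g c] and [g q] separates points of smaller and larger coordinate. *)
  destruct (Hpush _ (R2_open_wedge_pos (g c) (g q))) as [V1 [HV1 E1]].
  destruct (Hpush _ (R2_open_wedge_neg (g c) (g q))) as [V2 [HV2 E2]].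
  assert (Hside : forall z, C z -> z <> c ->
    (coord q < coord z -> V1 z) /\ (coord z < coord q -> V2 z)).
  { intros z Cz Hz. split; intros Hlt.
    - now apply E1, wedge_coord_pos.
    - apply E2; auto. rewrite <- wedge_antisym. now apply wedge_coord_pos. }
  apply Hcon. exists V1, V2. repeat split; auto.
  - intros z Az. destruct (HA z Az) as [Cz [Hz Hzq]].
    destruct (total_order_T (coord z) (coord q)) as [[Hlt|Heq]|Hgt].
    + right. now apply Hside.
    + now destruct Hzq; apply coord_inj.
    + left. now apply Hside.
  - exists r. split; auto. now apply Hside.
  - exists p. split; auto. now apply Hside.
  - intros z Az Hz1 Hz2. destruct (HA z Az) as [Cz _].
    apply E1 in Hz1; auto. apply E2 in Hz2; auto. lra.
Qed.

Hypothesis HC : is_circle X C.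

Lemma inv_dist_additive p q r : C p -> C q -> C r -> p <> c -> q <> c -> r <> c ->
  coord p < coord q -> coord q < coord r ->
  inv_dist c p r = inv_dist c p q + inv_dist c q r.
Proof.
  intros Cp Cq Cr Hp Hq Hr Hpq Hqr.
  (* The circle identity for [c, p, q, r], divided by [d(p, c) d(q, c) d(r, c)]. *)
  assert (Npq : p <> q) by (intros ->; lra). assert (Nqr : q <> r) by (intros ->; lra).
  assert (Npr : p <> r) by (intros ->; lra).
  destruct HC as [_ Hptolemy_eq].
  pose proof (Hptolemy_eq c p q r Cc Cp Cq Cr) as E.
  rewrite (dfac_sym c q), (dfac_sym c p), (dfac_sym c r) in E.
  specialize (E (not_eq_sym Hp) (not_eq_sym Hq) (not_eq_sym Hr) Npq Npr Nqr
                (coord_separates p q r Cp Cq Cr Hp Hq Hr Hpq Hqr)).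
  pose proof (dfac_gt0 p c Hp). pose proof (dfac_gt0 q c Hq).
  pose proof (dfac_gt0 r c Hr).
  unfold inv_dist.
  assert (dfac p r = (dfac p c * dfac q r + dfac r c * dfac p q) / dfac q c) as ->.
  { apply (Rmult_eq_reg_r (dfac q c)); [|lra].
    unfold Rdiv. rewrite Rmult_assoc, Rinv_l by lra. lra. }
  field. lra.
Qed.

Variable a : X.
Hypotheses (Ca : C a) (Hac : a <> c).

(* Orienting [inv_dist c a] by the stereographic order makes it an isometry of
   [(C \ {c}, inv_dist c)] onto the real line. *)
Definition line_coord (p : X) : R :=
  if Rlt_dec (coord a) (coord p) then inv_dist c a p else - inv_dist c a p.

Lemma line_coord_base : line_coord a = 0.
Proof. unfold line_coord. destruct (Rlt_dec _ _); [lra|]. rewrite inv_dist_self. lra. Qed.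

Lemma line_coord_sub p q : C p -> C q -> p <> c -> q <> c -> coord p < coord q ->
  line_coord q - line_coord p = inv_dist c p q.
Proof.
  intros Cp Cq Hp Hq Hpq. unfold line_coord.
  destruct (total_order_T (coord a) (coord p)) as [[Hap|Hap]|Hap].
  - rewrite (inv_dist_additive a p q) by auto.
    destruct (Rlt_dec _ (coord q)); [|lra]. destruct (Rlt_dec _ (coord p)); [|lra]. lra.
  - assert (a = p) as <- by now apply coord_inj.
    destruct (Rlt_dec _ (coord q)); [|lra]. destruct (Rlt_dec _ (coord a)); [lra|].
    rewrite inv_dist_self. lra.
  - destruct (Rlt_dec _ (coord p)); [lra|].
    destruct (total_order_T (coord a) (coord q)) as [[Haq|Haq]|Haq].
    + destruct (Rlt_dec _ (coord q)); [|lra].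
      rewrite (inv_dist_additive p a q), (inv_dist_sym c p a) by auto. lra.
    + assert (a = q) as <- by now apply coord_inj.
      destruct (Rlt_dec _ (coord a)); [lra|]. rewrite inv_dist_self, inv_dist_sym. lra.
    + destruct (Rlt_dec _ (coord q)); [lra|].
      rewrite (inv_dist_sym c a p), (inv_dist_sym c a q), (inv_dist_additive p q a) by auto. lra.
Qed.

Lemma inv_dist_line_coord p q : C p -> C q -> p <> c -> q <> c ->
  inv_dist c p q = Rabs (line_coord p - line_coord q).
Proof.
  intros Cp Cq Hp Hq.
  destruct (total_order_T (coord p) (coord q)) as [[Hpq|Hpq]|Hpq].
  - rewrite Rabs_minus_sym, line_coord_sub by auto.
    symmetry. apply Rabs_right, Rle_ge, inv_dist_ge0; auto.
  - assert (p = q) as <- by now apply coord_inj.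
    now rewrite inv_dist_self, Rminus_diag, Rabs_R0.
  - rewrite inv_dist_sym, line_coord_sub by auto.
    symmetry. apply Rabs_right, Rle_ge, inv_dist_ge0; auto.
Qed.

Lemma line_coord_param_continuous : continuity (fun t => line_coord (param t)).
Proof.
  intros t0 eps Heps.
  destruct (inv_dist_small_near c (param t0) eps (param_neq_center t0) Heps)
    as [B [HB [Bt0 HBq]]].
  destruct (param_near B t0 (basic_open_ems_open B HB) Bt0) as [del [Hdel Hnear]].
  exists del. split; auto. intros t [_ Ht]. simpl in *. unfold R_dist in *.
  destruct (HBq (param t) (Hnear t Ht)) as [_ Hd].
  rewrite inv_dist_line_coord, Rabs_minus_sym in Hd by (auto using param_in, param_neq_center).
  exact Hd.
Qed.

Lemma inv_dist_param_unbounded M : exists T, forall t, T < Rabs t -> M < inv_dist c a (param t).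
Proof.
  destruct (inv_dist_large_near_center c a M Hac) as [B [HB [Bc HBq]]].
  destruct (param_near_center B (basic_open_ems_open B HB) Bc) as [T HT].
  exists T. intros t Ht. apply HBq; [now apply HT|apply param_neq_center].
Qed.

Lemma line_coord_surj y : exists p, C p /\ p <> c /\ line_coord p = y.
Proof.
  destruct (inv_dist_param_unbounded (Rabs y)) as [T HT].
  set (t := Rabs T + Rabs (coord a) + 1).
  pose proof (Rabs_pos T). pose proof (Rle_abs T). pose proof (Rle_abs (coord a)).
  pose proof (Rabs_pos (coord a)). pose proof (Rle_abs (- coord a)). rewrite Rabs_Ropp in *.
  pose proof (Rle_abs y). pose proof (Rle_abs (- y)). rewrite Rabs_Ropp in *.
  assert (Hlow : line_coord (param (- t)) < y).
  { unfold line_coord. rewrite coord_param.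
    destruct (Rlt_dec _ _); [unfold t in *; lra|].
    assert (Ht : T < Rabs (- t)) by (unfold t; rewrite Rabs_Ropp, Rabs_right; lra).
    specialize (HT (- t) Ht). lra. }
  assert (Hhigh : y < line_coord (param t)).
  { unfold line_coord. rewrite coord_param.
    destruct (Rlt_dec _ _); [|unfold t in *; lra].
    assert (Ht : T < Rabs t) by (unfold t; rewrite Rabs_right; lra).
    specialize (HT t Ht). lra. }
  destruct (IVT (fun t => line_coord (param t) - y) (- t) t) as [z [_ Hz]].
  - apply continuity_minus; [apply line_coord_param_continuous|apply continuity_const].
    now intros u v.
  - unfold t; lra.
  - lra.
  - lra.
  - exists (param z). split; [apply param_in|]. split; [apply param_neq_center|]. lra.
Qed.

Variable b : X.
Hypotheses (Cb : C b) (Hab : a <> b) (Hbc : b <> c).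

Lemma line_coord_b_neq0 : line_coord b <> 0.
Proof.
  intros E. pose proof (inv_dist_gt0 c a b Hab Hac Hbc) as Hpos.
  rewrite inv_dist_line_coord, line_coord_base, E, Rminus_0_r, Rabs_R0 in Hpos by auto. lra.
Qed.

Let unit_len := Rabs (line_coord b).

Lemma unit_len_gt0 : 0 < unit_len.
Proof. apply Rabs_pos_lt, line_coord_b_neq0. Qed.

Definition ext_coord (p : X) : option R :=
  if excluded_middle_informative (p = c) then None else Some (line_coord p / line_coord b).

Lemma ext_coord_center : ext_coord c = None.
Proof. unfold ext_coord. now destruct (excluded_middle_informative (c = c)). Qed.

Lemma ext_coord_off_center p : p <> c -> ext_coord p = Some (line_coord p / line_coord b).
Proof. intros Hp. unfold ext_coord. now destruct (excluded_middle_informative (p = c)). Qed.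

Lemma ext_coord_None p : ext_coord p = None -> p = c.
Proof. unfold ext_coord. now destruct (excluded_middle_informative (p = c)). Qed.

Lemma ext_coord_Some p x : ext_coord p = Some x -> p <> c /\ line_coord p = x * line_coord b.
Proof.
  unfold ext_coord. destruct (excluded_middle_informative (p = c)); [discriminate|].
  intros E. injection E as <-. split; auto. field. apply line_coord_b_neq0.
Qed.

Lemma ext_coord_a : ext_coord a = Some 0.
Proof.
  rewrite ext_coord_off_center, line_coord_base by auto. f_equal. unfold Rdiv. ring.
Qed.

Lemma ext_coord_b : ext_coord b = Some 1.
Proof. rewrite ext_coord_off_center by auto. f_equal. field. apply line_coord_b_neq0. Qed.

Lemma inv_dist_ext_coord p q x y : ext_coord p = Some x -> ext_coord q = Some y ->
  C p -> C q -> inv_dist c p q = unit_len * Rabs (x - y).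
Proof.
  intros Ep Eq Cp Cq.
  destruct (ext_coord_Some p x Ep) as [Hp Lp], (ext_coord_Some q y Eq) as [Hq Lq].
  rewrite inv_dist_line_coord, Lp, Lq by auto. unfold unit_len.
  rewrite <- Rabs_mult. f_equal. ring.
Qed.

Lemma ext_coord_surj u : exists p, C p /\ ext_coord p = u.
Proof.
  destruct u as [y|]; [|exists c; split; [exact Cc|apply ext_coord_center]].
  destruct (line_coord_surj (y * line_coord b)) as [p [Cp [Hp Lp]]].
  exists p. split; auto. rewrite ext_coord_off_center, Lp by auto. f_equal.
  field. apply line_coord_b_neq0.
Qed.

Lemma ext_coord_inj p q : C p -> C q -> ext_coord p = ext_coord q -> p = q.
Proof.
  intros Cp Cq E. destruct (ext_coord p) as [x|] eqn:Ep.
  - destruct (classic (p = q)) as [|Npq]; auto.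
    destruct (ext_coord_Some p x Ep) as [Hp _], (ext_coord_Some q x (eq_sym E)) as [Hq _].
    pose proof (inv_dist_gt0 c p q Npq Hp Hq) as Hpos.
    rewrite (inv_dist_ext_coord p q x x), Rminus_diag, Rabs_R0 in Hpos by auto. lra.
  - rewrite (ext_coord_None p Ep). symmetry. now apply ext_coord_None.
Qed.

Definition ext_point (u : option R) : X :=
  proj1_sig (constructive_indefinite_description _ (ext_coord_surj u)).

Lemma ext_point_spec u : C (ext_point u) /\ ext_coord (ext_point u) = u.
Proof. unfold ext_point. now destruct (constructive_indefinite_description _ _). Qed.

Lemma ext_point_coord p : C p -> ext_point (ext_coord p) = p.
Proof. intros Cp. apply ext_coord_inj; auto; apply ext_point_spec. Qed.

Definition ext_scale (p : X) : R :=
  if excluded_middle_informative (p = c) then / sqrt unit_len else sqrt unit_len * dfac p c.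

Lemma ext_scale_neq0 p : C p -> ext_scale p <> 0.
Proof.
  intros _. pose proof (sqrt_lt_R0 unit_len unit_len_gt0). unfold ext_scale.
  destruct (excluded_middle_informative (p = c)).
  - now apply Rinv_neq_0_compat, Rgt_not_eq.
  - apply Rgt_not_eq, Rmult_lt_0_compat, dfac_gt0; auto.
Qed.

Lemma dfac_ext_dist p q : C p -> C q ->
  dfac p q = ext_dist (ext_coord p) (ext_coord q) * ext_scale p * ext_scale q.
Proof.
  intros Cp Cq. pose proof (sqrt_lt_R0 unit_len unit_len_gt0).
  pose proof (sqrt_sqrt unit_len (Rlt_le _ _ unit_len_gt0)) as Hsqrt.
  unfold ext_scale.
  destruct (excluded_middle_informative (p = c)) as [->|Hp];
    destruct (excluded_middle_informative (q = c)) as [->|Hq].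
  - rewrite dfac_self, ext_coord_center. simpl. ring.
  - rewrite ext_coord_center, ext_coord_off_center, dfac_sym by auto. simpl. field. lra.
  - rewrite ext_coord_center, ext_coord_off_center by auto. simpl. field. lra.
  - destruct (ext_coord p) as [x|] eqn:Ep; [|now destruct Hp; apply ext_coord_None].
    destruct (ext_coord q) as [y|] eqn:Eq; [|now destruct Hq; apply ext_coord_None].
    pose proof (dfac_gt0 p c Hp). pose proof (dfac_gt0 q c Hq).
    replace (dfac p q) with (inv_dist c p q * (dfac p c * dfac q c))
      by (unfold inv_dist; field; lra).
    rewrite (inv_dist_ext_coord p q x y Ep Eq Cp Cq). simpl.
    set (s := sqrt unit_len) in *. rewrite <- Hsqrt. ring.
Qed.

Lemma ext_point_open W : rel_open C W -> ext_open (fun u => W (ext_point u)).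
Proof.
  intros HW. pose proof unit_len_gt0. split.
  - intros x Wx. destruct (ext_point_spec (Some x)) as [Cp Ep].
    set (p := ext_point (Some x)) in *.
    destruct (ext_coord_Some p x Ep) as [Hp _].
    destruct (HW p Cp Wx) as [B [HB [Bp HBW]]].
    destruct (basic_open_contains_inv_ball c p B Hp HB Bp) as [eps [Heps HBq]].
    exists (eps / unit_len). split; [now apply Rdiv_lt_0_compat|]. intros y Hy.
    destruct (ext_point_spec (Some y)) as [Cq Eq].
    destruct (ext_coord_Some _ y Eq) as [Hq _].
    apply HBW, HBq; auto.
    rewrite (inv_dist_ext_coord p _ x y), Rabs_minus_sym by auto.
    apply Rlt_div_r in Hy; lra.
  - intros Wc. rewrite (ext_coord_None (ext_point None)) in Wc by apply ext_point_spec.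
    destruct (HW c Cc Wc) as [B [HB [Bc HBW]]].
    destruct (basic_open_contains_inv_coball c a B Hac HB Bc) as [M HM].
    exists (M / unit_len). intros y Hy.
    destruct (ext_point_spec (Some y)) as [Cq Eq].
    destruct (ext_coord_Some _ y Eq) as [Hq _].
    apply HBW, HM; auto.
    rewrite (inv_dist_ext_coord a _ 0 y ext_coord_a), Rminus_0_l, Rabs_Ropp by auto.
    apply Rlt_div_l in Hy; lra.
Qed.

Lemma ext_coord_open O : ext_open O -> rel_open C (fun p => O (ext_coord p)).
Proof.
  intros [Ofin Oinf] p Cp Op. pose proof unit_len_gt0.
  destruct (ext_coord p) as [x|] eqn:Ep.
  - destruct (ext_coord_Some p x Ep) as [Hp _].
    destruct (Ofin x Op) as [e [He HE]].
    destruct (inv_dist_small_near c p (e * unit_len) Hp) as [B [HB [Bp HBq]]]; [nra|].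
    exists B. repeat split; auto. intros q Cq Bq.
    destruct (HBq q Bq) as [Hq Hd].
    destruct (ext_coord q) as [y|] eqn:Eq; [|now destruct Hq; apply ext_coord_None].
    apply HE. rewrite (inv_dist_ext_coord p q x y), Rabs_minus_sym in Hd by auto.
    nra.
  - rewrite (ext_coord_None p Ep) in *.
    destruct (Oinf Op) as [M HM].
    destruct (inv_dist_large_near_center c a (M * unit_len) Hac) as [B [HB [Bc HBq]]].
    exists B. repeat split; auto. intros q Cq Bq.
    destruct (classic (q = c)) as [->|Hq]; [now rewrite ext_coord_center|].
    destruct (ext_coord q) as [y|] eqn:Eq; [|now destruct Hq; apply ext_coord_None].
    apply HM. specialize (HBq q Bq Hq).
    rewrite (inv_dist_ext_coord a q 0 y ext_coord_a), Rminus_0_l, Rabs_Ropp in HBq by auto.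
    nra.
Qed.

Definition chart_model : circle_model C a b c := {|
  model_coord := ext_coord;
  model_point := ext_point;
  model_scale := ext_scale;
  model_point_in u := proj1 (ext_point_spec u);
  model_coord_point u := proj2 (ext_point_spec u);
  model_point_coord := ext_point_coord;
  model_coord_a := ext_coord_a;
  model_coord_b := ext_coord_b;
  model_coord_c := ext_coord_center;
  model_dfac := dfac_ext_dist;
  model_scale_neq0 := ext_scale_neq0;
  model_point_open := ext_point_open;
  model_coord_open := ext_coord_open
|}.

End CircleChart.

Lemma circle_model_exists (X : EMS) (C : X -> Prop) (a b c : X) :
  is_circle X C -> C a -> C b -> C c -> a <> b -> a <> c -> b <> c ->
  inhabited (circle_model C a b c).
Proof.
  intros HC Ca Cb Cc Hab Hac Hbc. pose proof HC as [[f [g Hfg]] _].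
  constructor. exact (chart_model X C f g Hfg c Cc HC a Ca Hac b Cb Hab Hbc).
Qed.

Lemma rel_open_of_ems_open {X : EMS} (C : X -> Prop) (V : X -> Prop) :
  ems_open V -> rel_open C V.
Proof.
  intros HV p _ Vp. destruct (HV p Vp) as [B [HB [Bp HBV]]]. exists B. repeat split; auto.
Qed.

Lemma ems_open_of_rel_open {X : EMS} (C : X -> Prop) (W : X -> Prop) :
  rel_open C W -> exists U, ems_open U /\ forall p, C p -> (W p <-> U p).
Proof.
  intros HW.
  exists (fun q => exists p B, C p /\ W p /\ basic_open B /\ B p /\
                     (forall q', C q' -> B q' -> W q') /\ B q).
  split.
  - intros q [p [B [Cp [Wp [HB [Bp [HBW Bq]]]]]]]. exists B. repeat split; auto.
    intros q' Bq'. exists p, B. auto 10.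
  - intros p Cp. split.
    + intros Wp. destruct (HW p Cp Wp) as [B [HB [Bp HBW]]]. exists p, B. auto 10.
    + intros [o [B [_ [_ [_ [_ [HBW Bp]]]]]]]. auto.
Qed.

Definition ext_crt (u v w z : option R) : R * R * R :=
  (ext_dist u v * ext_dist w z, ext_dist u w * ext_dist v z, ext_dist u z * ext_dist v w).

Definition scale3 (K : R) (v : R * R * R) : R * R * R :=
  (K * fst (fst v), K * snd (fst v), K * snd v).

Lemma proj_eq_scale3 K1 K2 v : K1 <> 0 -> K2 <> 0 -> proj_eq (scale3 K1 v) (scale3 K2 v).
Proof.
  intros H1 H2. exists (K1 / K2). unfold scale3; simpl. repeat split.
  - unfold Rdiv. now apply Rmult_integral_contrapositive_currified, Rinv_neq_0_compat.
  - field. auto.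
  - field. auto.
  - field. auto.
Qed.

Lemma ext_crt_inj K1 K2 u v : K1 <> 0 -> K2 <> 0 ->
  proj_eq (scale3 K1 (ext_crt u (Some 0) (Some 1) None))
          (scale3 K2 (ext_crt v (Some 0) (Some 1) None)) -> u = v.
Proof.
  intros H1 H2 [t [Ht [e1 [e2 e3]]]]. unfold scale3, ext_crt in *.
  destruct u as [x|], v as [y|]; simpl in e1, e2, e3; auto;
    rewrite Rminus_0_l, Rabs_Ropp, Rabs_R1 in e3.
  - assert (K1 = t * K2) as -> by lra.
    assert (HtK : t * K2 <> 0) by now apply Rmult_integral_contrapositive_currified.
    assert (Ex : Rabs (x - 0) = Rabs (y - 0)) by (apply (Rmult_eq_reg_l (t * K2)); [lra|auto]).
    assert (Ex1 : Rabs (x - 1) = Rabs (y - 1)) by (apply (Rmult_eq_reg_l (t * K2)); [lra|auto]).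
    f_equal. revert Ex Ex1. unfold Rabs.
    destruct (Rcase_abs (x - 0)), (Rcase_abs (y - 0)), (Rcase_abs (x - 1)), (Rcase_abs (y - 1));
      intros; lra.
  - destruct H1. lra.
  - destruct (Rmult_integral_contrapositive_currified t K2 Ht H2). lra.
Qed.

Definition model_transfer {X X' : EMS} {C : X -> Prop} {C' : X' -> Prop} {a b c : X}
  {a' b' c' : X'} (M : circle_model C a b c) (M' : circle_model C' a' b' c') : X -> X' :=
  fun x => model_point M' (model_coord M x).

Section ModelTransfer.

Context {X X' : EMS} {C : X -> Prop} {C' : X' -> Prop} {a b c : X} {a' b' c' : X'}.
Variables (M : circle_model C a b c) (M' : circle_model C' a' b' c').

Lemma model_transfer_in x : C' (model_transfer M M' x).
Proof. apply (model_point_in M'). Qed.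

Lemma model_transfer_cancel x : C x -> model_transfer M' M (model_transfer M M' x) = x.
Proof. intros Cx. unfold model_transfer. now rewrite model_coord_point, model_point_coord. Qed.

Lemma model_transfer_pullback (V : X' -> Prop) : ems_open V ->
  exists U, ems_open U /\ forall x, C x -> (V (model_transfer M M' x) <-> U x).
Proof.
  intros HV. apply ems_open_of_rel_open.
  apply (model_coord_open M (O := fun u => V (model_point M' u))).
  apply model_point_open. now apply rel_open_of_ems_open.
Qed.

Lemma crt_model x y z w : C x -> C y -> C z -> C w ->
  crt x y z w = scale3 (model_scale M x * model_scale M y * model_scale M z * model_scale M w)
    (ext_crt (model_coord M x) (model_coord M y) (model_coord M z) (model_coord M w)).
Proof.
  intros. unfold crt, scale3, ext_crt. rewrite !(model_dfac M) by auto. simpl.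
  f_equal; [f_equal|]; ring.
Qed.

Lemma model_scale4_neq0 x y z w : C x -> C y -> C z -> C w ->
  model_scale M x * model_scale M y * model_scale M z * model_scale M w <> 0.
Proof.
  intros. repeat apply Rmult_integral_contrapositive_currified; now apply model_scale_neq0.
Qed.

End ModelTransfer.

Section ModelTransferMoebius.

Context {X X' : EMS} {C : X -> Prop} {C' : X' -> Prop} {a b c : X} {a' b' c' : X'}.
Variables (M : circle_model C a b c) (M' : circle_model C' a' b' c').

Lemma model_transfer_homeo :
  homeo_on ems_open ems_open C C' (model_transfer M M') (model_transfer M' M).
Proof.
  repeat split.
  - intros. apply model_transfer_in.
  - intros. apply model_transfer_in.
  - apply model_transfer_cancel.
  - apply model_transfer_cancel.
  - apply model_transfer_pullback.
  - apply model_transfer_pullback.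
Qed.

Lemma model_transfer_moebius : moebius_on C (model_transfer M M').
Proof.
  split.
  - intros x y Cx Cy E.
    now rewrite <- (model_transfer_cancel M M' x), <- (model_transfer_cancel M M' y), E.
  - intros x y z w Cx Cy Cz Cw _. unfold model_transfer.
    rewrite (crt_model M'), (crt_model M) by (auto; apply model_point_in).
    rewrite !model_coord_point.
    apply proj_eq_scale3; apply model_scale4_neq0; auto; apply model_point_in.
Qed.

Lemma model_transfer_abc : C' a' -> C' b' -> C' c' ->
  model_transfer M M' a = a' /\ model_transfer M M' b = b' /\ model_transfer M M' c = c'.
Proof.
  intros. unfold model_transfer.
  rewrite model_coord_a, model_coord_b, model_coord_c,
    <- (model_coord_a M'), <- (model_coord_b M'), <- (model_coord_c M').
  repeat split; now apply model_point_coord.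
Qed.

Lemma moebius_eq_model_transfer (phi : X -> X') :
  moebius_on C phi -> (forall x, C x -> C' (phi x)) ->
  phi a = a' -> phi b = b' -> phi c = c' -> C a -> C b -> C c -> a <> b -> a <> c -> b <> c ->
  forall x, C x -> phi x = model_transfer M M' x.
Proof.
  intros [_ Hcrt] HphiC Ea Eb Ec Ca Cb Cc Nab Nac Nbc x Cx.
  assert (C' a') by (rewrite <- Ea; auto). assert (C' b') by (rewrite <- Eb; auto).
  assert (C' c') by (rewrite <- Ec; auto). pose proof (HphiC x Cx).
  assert (Hadm : admissible x a b c) by (repeat split; intros [E1 E2]; subst; auto).
  specialize (Hcrt x a b c Cx Ca Cb Cc Hadm). rewrite Ea, Eb, Ec in Hcrt.
  rewrite (crt_model M'), (crt_model M) in Hcrt by auto.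
  rewrite (model_coord_a M), (model_coord_b M), (model_coord_c M),
    (model_coord_a M'), (model_coord_b M'), (model_coord_c M') in Hcrt.
  apply ext_crt_inj in Hcrt; [|apply model_scale4_neq0; auto..].
  unfold model_transfer. now rewrite <- Hcrt, model_point_coord.
Qed.

End ModelTransferMoebius.

Theorem theorem1p5 :
  forall (X X' : EMS), Ptolemy X -> Ptolemy X' ->
  forall (C : X -> Prop) (C' : X' -> Prop),
    is_circle X C -> is_circle X' C' ->
  forall (x1 x2 x3 : X) (y1 y2 y3 : X'),
    C x1 -> C x2 -> C x3 -> x1 <> x2 -> x1 <> x3 -> x2 <> x3 ->
    C' y1 -> C' y2 -> C' y3 -> y1 <> y2 -> y1 <> y3 -> y2 <> y3 ->
    exists phi : X -> X',
      (moebius_homeo C C' phi /\ phi x1 = y1 /\ phi x2 = y2 /\ phi x3 = y3) /\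
      (forall phi2 : X -> X',
         moebius_homeo C C' phi2 -> phi2 x1 = y1 -> phi2 x2 = y2 -> phi2 x3 = y3 ->
         forall x, C x -> phi2 x = phi x).
Proof.
  intros X X' _ _ C C' HC HC' x1 x2 x3 y1 y2 y3 C1 C2 C3 N12 N13 N23 C1' C2' C3' M12 M13 M23.
  destruct (circle_model_exists X C x1 x2 x3 HC C1 C2 C3 N12 N13 N23) as [M].
  destruct (circle_model_exists X' C' y1 y2 y3 HC' C1' C2' C3' M12 M13 M23) as [M'].
  exists (model_transfer M M'). split.
  - split; [split|].
    + exists (model_transfer M' M). apply model_transfer_homeo.
    + apply model_transfer_moebius.
    + now apply model_transfer_abc.
  - intros phi [[psi [HphiC _]] Hmoeb] E1 E2 E3.
    now apply moebius_eq_model_transfer.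
Qed.
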